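(* Let $\mathcal{C}$ be a class of groups, and suppose that either (a) $\mathcal{C}$ is closed under free products, or (b) $\mathcal{C}$ is closed under finite direct products and every free product of residually $\mathcal{C}$ groups is residually $\mathcal{C}$. Then the class of LE-$\mathcal{C}$ groups is closed under free products: the free product of any family of LE-$\mathcal{C}$ groups is LE-$\mathcal{C}$.
   Context: A class of groups is a family of groups closed under isomorphism. A group $G$ is residually $\mathcal{C}$ if for every $g\in G\setminus\{e\}$ there exist $C\in\mathcal{C}$ and a surjective homomorphism $\varphi\colon G\to C$ with $\varphi(g)\neq e$. For groups $G,C$ and a finite subset $K\subseteq G$, a map $\varphi\colon G\to C$ is a $K$-almost-homomorphism if $\varphi(k_1k_2)=\varphi(k_1)\varphi(k_2)$ for all $k_1,k_2\in K$ and $\varphi$ restricted to $K$ is injective. A group $G$ is locally embeddable into $\mathcal{C}$ (LE-$\mathcal{C}$) if for every finite subset $K\subseteq G$ there exist $C\in\mathcal{C}$ and a $K$-almost-homomorphism $G\to C$. *)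

From Stdlib Require Import List.

Record group := Group {
  carrier :> Type;
  gmul : carrier -> carrier -> carrier;
  gone : carrier;
  ginv : carrier -> carrier;
  gmulA : forall x y z, gmul x (gmul y z) = gmul (gmul x y) z;
  gmul1l : forall x, gmul gone x = x;
  gmul1r : forall x, gmul x gone = x;
  gmulVl : forall x, gmul (ginv x) x = gone;
  gmulVr : forall x, gmul x (ginv x) = gone
}.

Arguments gmul {g} _ _.
Arguments gone {g}.
Arguments ginv {g} _.

Record hom (G H : group) := Hom {
  hfun :> G -> H;
  hfun_mul : forall x y : G, hfun (gmul x y) = gmul (hfun x) (hfun y)
}.
Arguments hfun {G H} _ _.

Definition surjective_hom {G H : group} (f : hom G H) : Prop :=
  forall y : H, exists x : G, f x = y.

Definition isomorphic (G H : group) : Prop :=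
  exists f : hom G H, (forall x y, f x = f y -> x = y) /\ surjective_hom f.

Definition class_of_groups (C : group -> Prop) : Prop :=
  forall G H, isomorphic G H -> C G -> C H.

Definition is_free_product {I : Type} (G : I -> group) (P : group)
  (iota : forall i, hom (G i) P) : Prop :=
  forall (H : group) (f : forall i, hom (G i) H),
    exists phi : hom P H,
      (forall i (x : G i), phi (iota i x) = f i x) /\
      (forall psi : hom P H,
         (forall i (x : G i), psi (iota i x) = f i x) -> forall y, psi y = phi y).

Definition is_direct_product {I : Type} (G : I -> group) (P : group)
  (pi : forall i, hom P (G i)) : Prop :=
  forall (H : group) (f : forall i, hom H (G i)),
    exists phi : hom H P,
      (forall i (x : H), pi i (phi x) = f i x) /\
      (forall psi : hom H P,
         (forall i (x : H), pi i (psi x) = f i x) -> forall y, psi y = phi y).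

Definition finite_type (I : Type) : Prop := exists l : list I, forall i, In i l.

Definition closed_under_free_products (C : group -> Prop) : Prop :=
  forall (I : Type) (G : I -> group) (P : group) (iota : forall i, hom (G i) P),
    is_free_product G P iota -> (forall i, C (G i)) -> C P.

(** Finite direct products (the empty product, i.e. the trivial group, included). *)
Definition closed_under_finite_direct_products (C : group -> Prop) : Prop :=
  forall (I : Type) (G : I -> group) (P : group) (pi : forall i, hom P (G i)),
    finite_type I -> is_direct_product G P pi -> (forall i, C (G i)) -> C P.

Definition residually (C : group -> Prop) (G : group) : Prop :=
  forall g : G, g <> gone ->
    exists (K : group) (phi : hom G K), C K /\ surjective_hom phi /\ phi g <> gone.

Definition free_products_of_residually_preserve (C : group -> Prop) : Prop :=
  forall (I : Type) (G : I -> group) (P : group) (iota : forall i, hom (G i) P),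
    is_free_product G P iota -> (forall i, residually C (G i)) -> residually C P.

Definition almost_hom {G H : group} (K : list G) (phi : G -> H) : Prop :=
  (forall k1 k2, In k1 K -> In k2 K -> phi (gmul k1 k2) = gmul (phi k1) (phi k2)) /\
  (forall k1 k2, In k1 K -> In k2 K -> phi k1 = phi k2 -> k1 = k2).

Definition LE (C : group -> Prop) (G : group) : Prop :=
  forall K : list G, exists (H : group) (phi : G -> H), C H /\ almost_hom K phi.

From Stdlib Require Import List ClassicalEpsilon ProofIrrelevance.
Import ListNotations.

(* A free product is realised concretely by reduced words.  For a finite set K
   in a free product of the G i, reducing the concatenations of the normal forms
   of elements of K only ever merges finitely many letters.  Choosing, for each i,
   an almost-homomorphism from G i into a group of C that is faithful and
   multiplicative on these letters, the letterwise image of normal forms is a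
   K-almost-homomorphism into the free product of those groups.  Under (a) that
   free product lies in C; under (b) it is residually C, and its finitely many
   relevant elements are separated by a homomorphism into a finite direct product
   of groups in C. *)

Definition decide (P : Prop) : {P} + {~ P} := excluded_middle_informative P.

Lemma decide_eq_refl (X : Type) (x : X) : decide (x = x) = left eq_refl.
Proof.
  destruct (decide (x = x)) as [e | n].
  - now rewrite (proof_irrelevance _ e eq_refl).
  - now exfalso.
Qed.

Lemma gmul_idem_one (G : group) (x : G) : gmul x x = x -> x = gone.
Proof.
  intro Hxx.
  assert (E : gmul (ginv x) (gmul x x) = gmul (ginv x) x) by now rewrite Hxx.
  now rewrite gmulA, gmulVl, gmul1l in E.
Qed.

Lemma ginvK (G : group) (x : G) : ginv (ginv x) = x.
Proof.
  rewrite <- (gmul1r _ (ginv (ginv x))), <- (gmulVl _ x), gmulA, gmulVl, gmul1l.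
  reflexivity.
Qed.

Lemma gmul_eq_one_l (G : group) (x y : G) : gmul x (ginv y) = gone -> x = y.
Proof.
  intro E. now rewrite <- (gmul1r _ x), <- (gmulVl _ y), gmulA, E, gmul1l.
Qed.

Lemma hom1 (G H : group) (f : hom G H) : f gone = gone.
Proof. apply gmul_idem_one. now rewrite <- hfun_mul, gmul1l. Qed.

Definition hom_comp {A B D : group} (f : hom A B) (g : hom B D) : hom A D.
Proof.
  refine (Hom A D (fun x => g (f x)) _). intros x y. now rewrite !hfun_mul.
Defined.

Definition hom_id (A : group) : hom A A := Hom A A (fun x => x) (fun x y => eq_refl).

Section ReducedWords.
Variable I : Type.
Variable A : I -> group.

Definition letter := {i : I & A i}.

Definition mul_letter (l : letter) (w : list letter) : list letter :=
  match l with existT _ i g =>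
  match w with
  | nil => if decide (g = gone) then nil else [existT A i g]
  | existT _ j x :: w' =>
     match decide (j = i) with
     | left e => if decide (gmul g (eq_rect j A x i e) = gone) then w'
                 else existT A i (gmul g (eq_rect j A x i e)) :: w'
     | right _ => if decide (g = gone) then w else existT A i g :: w
     end
  end end.

Definition head_index_neq (i : I) (w : list letter) : Prop :=
  match w with nil => True | l :: _ => projT1 l <> i end.

Fixpoint reduced (w : list letter) : Prop :=
  match w with
  | nil => True
  | l :: w' => projT2 l <> gone /\ head_index_neq (projT1 l) w' /\ reduced w'
  end.

Lemma reduced_mul_letter l w : reduced w -> reduced (mul_letter l w).
Proof.
  destruct l as [i g], w as [| [j x] w']; simpl.
  - intros _. destruct (decide (g = gone)); simpl; auto.
  - intros (Hx & Hh & Hw). destruct (decide (j = i)) as [e | n].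
    + subst. simpl. destruct (decide _); simpl; auto.
    + destruct (decide (g = gone)); simpl; auto.
Qed.

Lemma mul_letter1 i w : reduced w -> mul_letter (existT A i gone) w = w.
Proof.
  destruct w as [| [j x] w']; simpl.
  - intros _. destruct (decide (gone = gone)); [reflexivity | now exfalso].
  - intros (Hx & Hh & Hw). destruct (decide (j = i)) as [e | n].
    + subst. simpl. rewrite gmul1l. destruct (decide (x = gone)); [contradiction | reflexivity].
    + destruct (decide (gone = gone)); [reflexivity | now exfalso].
Qed.

Lemma mul_letterM i g h w : reduced w ->
  mul_letter (existT A i g) (mul_letter (existT A i h) w) = mul_letter (existT A i (gmul g h)) w.
Proof.
  destruct w as [| [j x] w'].
  - intros _. simpl. destruct (decide (h = gone)) as [Eh | Eh].
    + subst h. now rewrite gmul1r.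
    + simpl. now rewrite decide_eq_refl.
  - intros (Hx & Hh & Hw). simpl in Hx, Hh. destruct (decide (j = i)) as [e | n].
    + subst j. simpl. rewrite decide_eq_refl. simpl.
      destruct (decide (gmul h x = gone)) as [E | E].
      * rewrite <- gmulA, E, gmul1r.
        destruct w' as [| [k y] w'']; simpl; [reflexivity |].
        destruct (decide (k = i)); [contradiction | reflexivity].
      * simpl. rewrite decide_eq_refl. simpl. now rewrite gmulA.
    + simpl. destruct (decide (j = i)); [contradiction |].
      destruct (decide (h = gone)) as [Eh | Eh].
      * subst h. rewrite gmul1r. simpl.
        destruct (decide (j = i)); [contradiction | reflexivity].
      * simpl. now rewrite decide_eq_refl.
Qed.

Lemma mul_letter_reduced_cons l w : reduced (l :: w) -> mul_letter l w = l :: w.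
Proof.
  destruct l as [i g], w as [| [j x] w']; simpl; intros (Hg & Hh & Hw).
  - destruct (decide (g = gone)); [contradiction | reflexivity].
  - destruct (decide (j = i)); [contradiction |].
    destruct (decide (g = gone)); [contradiction | reflexivity].
Qed.

(* [mul_word w s] multiplies the reduced word [s] on the left by the letters of
   the arbitrary word [w]; [mul_word w nil] is the normal form of [w]. *)
Fixpoint mul_word (w s : list letter) : list letter :=
  match w with nil => s | l :: w' => mul_letter l (mul_word w' s) end.

Lemma reduced_mul_word w s : reduced s -> reduced (mul_word w s).
Proof. induction w; simpl; auto using reduced_mul_letter. Qed.

Lemma mul_word_cat w1 w2 s : mul_word (w1 ++ w2) s = mul_word w1 (mul_word w2 s).
Proof. induction w1; simpl; congruence. Qed.

Lemma mul_word_reduced_nil w : reduced w -> mul_word w nil = w.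
Proof.
  induction w as [| l w IH]; simpl; intros Hw; [reflexivity |].
  rewrite IH by apply Hw. now apply mul_letter_reduced_cons.
Qed.

Lemma mul_letter_nil i g :
  mul_letter (existT A i g) nil = if decide (g = gone) then nil else [existT A i g].
Proof. reflexivity. Qed.

Lemma mul_letter_cons i g j x w : mul_letter (existT A i g) (existT A j x :: w) =
  match decide (j = i) with
  | left e => if decide (gmul g (eq_rect j A x i e) = gone) then w
              else existT A i (gmul g (eq_rect j A x i e)) :: w
  | right _ => if decide (g = gone) then existT A j x :: w
               else existT A i g :: existT A j x :: w
  end.
Proof. reflexivity. Qed.

Lemma mul_word_mul_letter l w s : reduced w -> reduced s ->
  mul_word (mul_letter l w) s = mul_letter l (mul_word w s).
Proof.
  destruct l as [i g], w as [| [j x] w']; intros Hw Hs.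
  - rewrite mul_letter_nil. destruct (decide (g = gone)) as [E | E]; [| reflexivity].
    subst. symmetry. now apply mul_letter1.
  - destruct Hw as (Hx & Hh & Hw). rewrite mul_letter_cons.
    destruct (decide (j = i)) as [e | n].
    + subst j. cbn [eq_rect mul_word]. rewrite mul_letterM by now apply reduced_mul_word.
      destruct (decide (gmul g x = gone)) as [E | E]; [| reflexivity].
      rewrite E, mul_letter1 by now apply reduced_mul_word. reflexivity.
    + destruct (decide (g = gone)) as [E | E]; [| reflexivity].
      subst. cbn [mul_word]. symmetry.
      apply mul_letter1, reduced_mul_letter, reduced_mul_word; auto.
Qed.

Lemma mul_word_normalize w s : reduced s -> mul_word (mul_word w nil) s = mul_word w s.
Proof.
  intro Hs. induction w as [| l w IH]; simpl; [reflexivity |].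
  rewrite mul_word_mul_letter, IH; auto. now apply reduced_mul_word.
Qed.

Definition letter_inv (l : letter) : letter :=
  match l with existT _ i g => existT A i (ginv g) end.

Definition word_inv (w : list letter) : list letter := rev (map letter_inv w).

Lemma mul_word_invK w s : reduced s -> mul_word (word_inv w) (mul_word w s) = s.
Proof.
  intro Hs. induction w as [| [i g] w IH]; [reflexivity |].
  unfold word_inv in *. cbn [map rev]. rewrite mul_word_cat. cbn [mul_word letter_inv].
  rewrite mul_letterM, gmulVl, mul_letter1 by now apply reduced_mul_word.
  exact IH.
Qed.

Lemma word_invK w : word_inv (word_inv w) = w.
Proof.
  unfold word_inv. rewrite map_rev, rev_involutive, map_map.
  induction w as [| [i g] w IH]; simpl; [reflexivity |]. now rewrite ginvK, IH.
Qed.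

Definition reduced_word := {w : list letter | reduced w}.

Lemma reduced_word_eq (a b : reduced_word) : proj1_sig a = proj1_sig b -> a = b.
Proof. destruct a, b; simpl; intros ->; f_equal; apply proof_irrelevance. Qed.

Definition rword_mul (a b : reduced_word) : reduced_word :=
  exist _ (mul_word (proj1_sig a) (proj1_sig b)) (reduced_mul_word _ _ (proj2_sig b)).
Definition rword_one : reduced_word := exist _ nil Logic.I.
Definition rword_inv (a : reduced_word) : reduced_word :=
  exist _ (mul_word (word_inv (proj1_sig a)) nil) (reduced_mul_word _ nil Logic.I).

Lemma rword_mulA x y z : rword_mul x (rword_mul y z) = rword_mul (rword_mul x y) z.
Proof.
  apply reduced_word_eq. destruct x as [x Hx], y as [y Hy], z as [z Hz]; simpl.
  replace (mul_word x y) with (mul_word (x ++ y) nil)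
    by now rewrite mul_word_cat, mul_word_reduced_nil.
  now rewrite mul_word_normalize, mul_word_cat.
Qed.

Lemma rword_mul1l x : rword_mul rword_one x = x.
Proof. now apply reduced_word_eq. Qed.

Lemma rword_mul1r x : rword_mul x rword_one = x.
Proof. apply reduced_word_eq. destruct x as [x Hx]. now apply mul_word_reduced_nil. Qed.

Lemma rword_mulVl x : rword_mul (rword_inv x) x = rword_one.
Proof.
  apply reduced_word_eq. destruct x as [x Hx]; simpl.
  rewrite mul_word_normalize by exact Hx.
  rewrite <- (mul_word_reduced_nil x Hx) at 2. now apply mul_word_invK.
Qed.

Lemma rword_mulVr x : rword_mul x (rword_inv x) = rword_one.
Proof.
  apply reduced_word_eq. destruct x as [x Hx]; simpl.
  rewrite <- (word_invK x) at 1. now apply mul_word_invK.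
Qed.

Definition free_product_group : group :=
  Group reduced_word rword_mul rword_one rword_inv rword_mulA rword_mul1l rword_mul1r rword_mulVl rword_mulVr.

Definition rword_letter (i : I) (x : A i) : free_product_group :=
  exist _ (mul_letter (existT A i x) nil) (reduced_mul_letter _ nil Logic.I).

Lemma rword_letterM i (x y : A i) : rword_letter i (gmul x y) = gmul (rword_letter i x) (rword_letter i y).
Proof.
  apply reduced_word_eq. cbn [proj1_sig gmul free_product_group rword_mul rword_letter].
  rewrite mul_word_mul_letter by (exact Logic.I || apply reduced_mul_letter; exact Logic.I).
  cbn [mul_word]. now rewrite mul_letterM.
Qed.

Definition free_product_inj (i : I) : hom (A i) free_product_group :=
  Hom _ _ (rword_letter i) (rword_letterM i).

Section Evaluation.
Variable H : group.
Variable h : forall i, hom (A i) H.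

Definition eval_letter (l : letter) : H := match l with existT _ i x => h i x end.

Fixpoint eval_word (w : list letter) : H :=
  match w with nil => gone | l :: w' => gmul (eval_letter l) (eval_word w') end.

Lemma eval_mul_letter l w : reduced w -> eval_word (mul_letter l w) = gmul (eval_letter l) (eval_word w).
Proof.
  destruct l as [i g], w as [| [j x] w']; intros Hw; simpl.
  - destruct (decide (g = gone)) as [E | E]; [| reflexivity].
    subst. simpl. now rewrite hom1, gmul1l.
  - destruct (decide (j = i)) as [e | n].
    + subst. simpl. destruct (decide (gmul g x = gone)) as [E | E]; simpl.
      * now rewrite gmulA, <- hfun_mul, E, hom1, gmul1l.
      * now rewrite hfun_mul, gmulA.
    + destruct (decide (g = gone)) as [E | E]; [| reflexivity].
      subst. now rewrite hom1, gmul1l.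
Qed.

Lemma eval_mul_word w s : reduced s -> eval_word (mul_word w s) = gmul (eval_word w) (eval_word s).
Proof.
  intro Hs. induction w as [| l w IH]; simpl; [now rewrite gmul1l |].
  rewrite eval_mul_letter by now apply reduced_mul_word. now rewrite IH, gmulA.
Qed.

Definition eval_rword (a : free_product_group) : H := eval_word (proj1_sig a).

Lemma eval_rwordM (a b : free_product_group) : eval_rword (gmul a b) = gmul (eval_rword a) (eval_rword b).
Proof. destruct a as [a Ha], b as [b Hb]. now apply eval_mul_word. Qed.

End Evaluation.

Lemma reduced_word_cons i x w (Hxw : reduced (existT A i x :: w)) :
  exist reduced (existT A i x :: w) Hxw
  = gmul (free_product_inj i x) (exist reduced w (proj2 (proj2 Hxw)) : free_product_group).
Proof.
  apply reduced_word_eq. cbn [proj1_sig gmul free_product_group rword_mul free_product_inj hfun rword_letter].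
  rewrite mul_word_mul_letter by (exact Logic.I || exact (proj2 (proj2 Hxw))). cbn [mul_word].
  symmetry. now apply mul_letter_reduced_cons.
Qed.

Lemma free_product_groupP : is_free_product A free_product_group free_product_inj.
Proof.
  intros H h. exists (Hom _ _ (eval_rword H h) (eval_rwordM H h)). split.
  - intros i x. cbn [hfun free_product_inj]. unfold eval_rword, rword_letter. cbn [proj1_sig].
    rewrite eval_mul_letter by exact Logic.I. apply gmul1r.
  - intros psi Hpsi [w Hw]. cbn [hfun]. unfold eval_rword. cbn [proj1_sig].
    induction w as [| [i x] w IH].
    + cbn [eval_word]. rewrite <- (hom1 _ _ psi). f_equal. now apply reduced_word_eq.
    + rewrite reduced_word_cons, hfun_mul, Hpsi. simpl. now rewrite IH.
Qed.

End ReducedWords.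

Arguments mul_letter {I A} _ _.
Arguments reduced {I A} _.
Arguments mul_word {I A} _ _.
Arguments reduced_word_eq {I A} _ _ _.

Section LetterwiseMaps.
Variable I : Type.
Variables A B : I -> group.

Definition merged_letters (l : letter I A) (w : list (letter I A)) : list (letter I A) :=
  match l with existT _ i g =>
  match w with
  | existT _ j x :: _ =>
      match decide (j = i) with
      | left e => [existT A i (eq_rect j A x i e); existT A i (gmul g (eq_rect j A x i e))]
      | right _ => nil
      end
  | nil => nil
  end end.

(* The letters of [w] together with every pair of letters merged while
   [mul_word w nil] computes the normal form of [w]. *)
Fixpoint reduction_letters (w : list (letter I A)) : list (letter I A) :=
  match w with
  | nil => nil
  | l :: w' => l :: merged_letters l (mul_word w' nil) ++ reduction_letters w'
  end.

Lemma in_reduction_letters l w : In l w -> In l (reduction_letters w).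
Proof.
  induction w as [| l' w IH]; simpl; [auto |]. intros [E | H]; [now left |].
  right. apply in_or_app. auto.
Qed.

Lemma reduction_letters_app_r w1 w2 l :
  In l (reduction_letters w2) -> In l (reduction_letters (w1 ++ w2)).
Proof.
  induction w1 as [| l' w1 IH]; simpl; [auto |]. intro H.
  right. apply in_or_app. auto.
Qed.

Variable f : forall i, A i -> B i.

Definition map_letter (l : letter I A) : letter I B :=
  match l with existT _ i x => existT B i (f i x) end.

Variable L : forall i, list (A i).
Hypothesis L_one : forall i, In gone (L i).
Hypothesis f_almost_hom : forall i, almost_hom (L i) (f i).

Definition in_support (l : letter I A) : Prop := In (projT2 l) (L (projT1 l)).

Lemma f_one i : f i gone = gone.
Proof.
  apply gmul_idem_one. rewrite <- (proj1 (f_almost_hom i)) by apply L_one.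
  now rewrite gmul1l.
Qed.

Lemma f_eq_one i x : In x (L i) -> f i x = gone <-> x = gone.
Proof.
  intro Hx. split.
  - intro E. apply (proj2 (f_almost_hom i)); auto. now rewrite E, f_one.
  - intros ->. apply f_one.
Qed.

Lemma map_mul_letter l w : in_support l -> (forall l', In l' (merged_letters l w) -> in_support l') ->
  mul_letter (map_letter l) (map map_letter w) = map map_letter (mul_letter l w).
Proof.
  destruct l as [i g], w as [| [j x] w']; intros Hl Hmerged; unfold in_support in Hl; simpl in Hl.
  - cbn [map map_letter]. rewrite !mul_letter_nil.
    pose proof (f_eq_one i g Hl).
    destruct (decide (f i g = gone)), (decide (g = gone)); tauto || reflexivity.
  - cbn [map map_letter]. rewrite !mul_letter_cons. cbn [merged_letters] in Hmerged.
    destruct (decide (j = i)) as [e | n].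
    + subst j. cbn [eq_rect] in *.
      assert (Hx : In x (L i)) by (apply (Hmerged (existT A i x)); now left).
      assert (Hgx : In (gmul g x) (L i))
        by (apply (Hmerged (existT A i (gmul g x))); right; now left).
      rewrite <- (proj1 (f_almost_hom i)) by auto.
      pose proof (f_eq_one i _ Hgx).
      destruct (decide (f i (gmul g x) = gone)), (decide (gmul g x = gone)); tauto || reflexivity.
    + pose proof (f_eq_one i g Hl).
      destruct (decide (f i g = gone)), (decide (g = gone)); tauto || reflexivity.
Qed.

Lemma map_normal_form w : (forall l, In l (reduction_letters w) -> in_support l) ->
  mul_word (map map_letter w) nil = map map_letter (mul_word w nil).
Proof.
  induction w as [| l w IH]; intros Hw; [reflexivity |].
  cbn [map mul_word]. rewrite IH.
  - apply map_mul_letter.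
    + apply Hw. now left.
    + intros l' Hl'. apply Hw. right. apply in_or_app. now left.
  - intros l' Hl'. apply Hw. right. apply in_or_app. now right.
Qed.

Lemma map_letter_inj w1 : forall w2,
  (forall l, In l w1 -> in_support l) -> (forall l, In l w2 -> in_support l) ->
  map map_letter w1 = map map_letter w2 -> w1 = w2.
Proof.
  induction w1 as [| [i x] w1 IH]; intros [| [j y] w2] H1 H2 E; try discriminate; auto.
  cbn [map map_letter] in E. injection E as <- Exy E.
  apply inj_pair2 in Exy.
  assert (x = y).
  { apply (proj2 (f_almost_hom i)); auto.
    - apply (H1 (existT A i x)); now left.
    - apply (H2 (existT A i y)); now left. }
  subst y. f_equal. apply IH; auto.
  - intros; apply H1; now right.
  - intros; apply H2; now right.
Qed.

Definition map_rword (a : free_product_group I A) : free_product_group I B :=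
  exist _ (mul_word (map map_letter (proj1_sig a)) nil) (reduced_mul_word _ _ _ nil Logic.I).

(* Normal forms of products of elements of [K] are computed by merging letters
   only inside [L]; there the [f i] behave like homomorphisms. *)
Lemma map_rword_almost_hom (K : list (free_product_group I A)) :
  (forall a b, In a K -> In b K ->
     forall l, In l (reduction_letters (proj1_sig a ++ proj1_sig b)) -> in_support l) ->
  almost_hom K map_rword.
Proof.
  intro HK.
  split.
  - intros [a Ha] [b Hb] Hina Hinb. apply reduced_word_eq.
    cbn [proj1_sig map_rword gmul free_product_group rword_mul].
    rewrite mul_word_normalize by now apply reduced_mul_word.
    replace (mul_word a b) with (mul_word (a ++ b) nil)
      by now rewrite mul_word_cat, mul_word_reduced_nil.
    rewrite <- map_normal_form by exact (HK _ _ Hina Hinb).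
    rewrite mul_word_normalize by exact Logic.I.
    now rewrite map_app, mul_word_cat.
  - assert (Hnf : forall a, In a K -> proj1_sig (map_rword a) = map map_letter (proj1_sig a)).
    { intros [a Ha] Hin. cbn [proj1_sig map_rword].
      rewrite map_normal_form, mul_word_reduced_nil; auto.
      intros l Hl. apply (HK _ _ Hin Hin). now apply reduction_letters_app_r. }
    intros a b Hina Hinb E. apply reduced_word_eq.
    apply (f_equal (@proj1_sig _ _)) in E. rewrite (Hnf a Hina), (Hnf b Hinb) in E.
    apply map_letter_inj in E; auto; intros l Hl.
    + apply (HK a a Hina Hina). apply reduction_letters_app_r. now apply in_reduction_letters.
    + apply (HK b b Hinb Hinb). apply reduction_letters_app_r. now apply in_reduction_letters.
Qed.

End LetterwiseMaps.

Arguments reduction_letters {I A} _.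
Arguments map_rword {I A B} _ _.

Definition letters_at {I : Type} {A : I -> group} (i : I) (ls : list (letter I A)) : list (A i) :=
  flat_map (fun l => match l with existT _ j x =>
     match decide (j = i) with left e => [eq_rect j A x i e] | right _ => nil end end) ls.

Lemma in_letters_at {I : Type} {A : I -> group} i (x : A i) ls :
  In (existT A i x) ls -> In x (letters_at i ls).
Proof.
  intro H. apply in_flat_map. exists (existT A i x). split; auto.
  rewrite decide_eq_refl. now left.
Qed.

Lemma LE_choice (C : group -> Prop) (I : Type) (G : I -> group) (L : forall i, list (G i)) :
  (forall i, LE C (G i)) ->
  exists (D : I -> group) (f : forall i, G i -> D i),
    (forall i, C (D i)) /\ (forall i, almost_hom (L i) (f i)).
Proof.
  intro HLE.
  set (target i := constructive_indefinite_description _ (HLE i (L i))).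
  set (map_to i := constructive_indefinite_description _ (proj2_sig (target i))).
  exists (fun i => proj1_sig (target i)), (fun i => proj1_sig (map_to i)).
  split; intro i; apply (proj2_sig (map_to i)).
Qed.

Lemma free_product_group_LE (C : group -> Prop) (I : Type) (G : I -> group) :
  (forall i, LE C (G i)) -> forall K : list (free_product_group I G),
  exists (D : I -> group) (phi : free_product_group I G -> free_product_group I D),
    (forall i, C (D i)) /\ almost_hom K phi.
Proof.
  intros HLE K.
  set (ls := flat_map (fun p => reduction_letters (proj1_sig (fst p) ++ proj1_sig (snd p)))
                      (list_prod K K)).
  set (L i := gone :: letters_at i ls).
  destruct (LE_choice C I G L HLE) as [D [f [HD Hf]]].
  exists D, (map_rword f). split; [exact HD |].
  apply (map_rword_almost_hom I G D f L); auto.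
  - intro i. now left.
  - intros a b Ha Hb [i x] Hl. right. apply in_letters_at, in_flat_map.
    exists (a, b). split; [now apply in_prod | exact Hl].
Qed.

Lemma free_product_hom_inj (I : Type) (G : I -> group) (P Q : group)
    (iota : forall i, hom (G i) P) (kappa : forall i, hom (G i) Q) :
  is_free_product G P iota -> is_free_product G Q kappa ->
  exists theta : hom P Q, forall x y, theta x = theta y -> x = y.
Proof.
  intros HP HQ.
  destruct (HP Q kappa) as [theta [Htheta _]].
  destruct (HQ P iota) as [rho [Hrho _]].
  destruct (HP P iota) as [id_P [_ Huniq]].
  assert (Hretract : forall x, rho (theta x) = x).
  { intro x. transitivity (id_P x).
    - apply (Huniq (hom_comp theta rho)). intros i y. simpl. now rewrite Htheta, Hrho.
    - symmetry. now apply (Huniq (hom_id P)). }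
  exists theta. intros x y E. now rewrite <- (Hretract x), <- (Hretract y), E.
Qed.

Lemma almost_hom_comp_inj_hom (P Q R : group) (theta : hom P Q) (phi : Q -> R) (K : list P) :
  (forall x y, theta x = theta y -> x = y) -> almost_hom (map theta K) phi ->
  almost_hom K (fun x => phi (theta x)).
Proof.
  intros Hinj [Hmul Hsep]. split.
  - intros x y Hx Hy. rewrite hfun_mul. apply Hmul; now apply in_map.
  - intros x y Hx Hy E. apply Hinj, Hsep; auto; now apply in_map.
Qed.

Lemma free_product_LE (C : group -> Prop) (I : Type) (G : I -> group) (P : group)
    (iota : forall i, hom (G i) P) :
  is_free_product G P iota -> (forall i, LE C (G i)) -> forall K : list P,
  exists (D : I -> group) (phi : P -> free_product_group I D),
    (forall i, C (D i)) /\ almost_hom K phi.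
Proof.
  intros HP HLE K.
  destruct (free_product_hom_inj I G P _ iota _ HP (free_product_groupP I G)) as [theta Hinj].
  destruct (free_product_group_LE C I G HLE (map theta K)) as [D [phi [HD Hphi]]].
  exists D, (fun x => phi (theta x)). split; [exact HD |].
  now apply almost_hom_comp_inj_hom.
Qed.

Definition trivial_group : group.
Proof.
  refine (Group unit (fun _ _ => tt) tt (fun _ => tt) _ _ _ _ _);
    intros; repeat match goal with x : unit |- _ => destruct x end; reflexivity.
Defined.

Definition prod_group (H K : group) : group.
Proof.
  refine (Group (H * K)%type
    (fun x y => (gmul (fst x) (fst y), gmul (snd x) (snd y)))
    (gone, gone) (fun x => (ginv (fst x), ginv (snd x))) _ _ _ _ _);
  intros; repeat match goal with x : (_ * _)%type |- _ => destruct x end; simpl;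
  f_equal; auto using gmulA, gmul1l, gmul1r, gmulVl, gmulVr.
Defined.

Definition hom_pair {X H K : group} (f : hom X H) (g : hom X K) : hom X (prod_group H K).
Proof.
  refine (Hom X (prod_group H K) (fun x => (f x, g x)) _).
  intros x y. simpl. now rewrite !hfun_mul.
Defined.

Definition prod_proj (H K : group) (b : bool) : hom (prod_group H K) (if b then H else K) :=
  match b as b' return hom (prod_group H K) (if b' then H else K) with
  | true => Hom (prod_group H K) H fst (fun x y => eq_refl)
  | false => Hom (prod_group H K) K snd (fun x y => eq_refl)
  end.

Lemma prod_groupP (H K : group) :
  is_direct_product (fun b : bool => if b then H else K) (prod_group H K) (prod_proj H K).
Proof.
  intros X f. exists (hom_pair (f true) (f false)). split.
  - now intros [|] x.
  - intros psi Hpsi y. simpl. rewrite <- (Hpsi true y), <- (Hpsi false y).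
    now destruct (hfun psi y).
Qed.

Definition empty_family : Empty_set -> group := fun e => match e with end.
Definition empty_proj : forall e, hom trivial_group (empty_family e) := fun e => match e with end.

Lemma trivial_groupP : is_direct_product empty_family trivial_group empty_proj.
Proof.
  intros X f. exists (Hom X trivial_group (fun _ => tt) (fun _ _ => eq_refl)). split.
  - intros [].
  - intros psi _ y. now destruct (hfun psi y).
Qed.

Section FiniteDirectProducts.
Variable C : group -> Prop.
Hypothesis C_fdp : closed_under_finite_direct_products C.

Lemma C_trivial_group : C trivial_group.
Proof.
  apply (C_fdp Empty_set empty_family trivial_group empty_proj).
  - exists nil. intros [].
  - exact trivial_groupP.
  - intros [].
Qed.

Lemma C_prod_group H K : C H -> C K -> C (prod_group H K).
Proof.
  intros HH HK. apply (C_fdp bool _ _ (prod_proj H K)).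
  - exists [true; false]. intros [|]; simpl; auto.
  - apply prod_groupP.
  - now intros [|].
Qed.

(* Separating a pair [a <> b] needs a quotient where [a b^-1] survives;
   finitely many such quotients are combined into their product. *)
Lemma residually_separates (Q : group) : residually C Q ->
  forall ps : list (Q * Q), exists (H : group) (pi : hom Q H), C H /\
    forall a b, In (a, b) ps -> pi a = pi b -> a = b.
Proof.
  intros Hres ps. induction ps as [| [a b] ps IH].
  - exists trivial_group, (Hom Q trivial_group (fun _ => tt) (fun _ _ => eq_refl)).
    split; [exact C_trivial_group | intros a b []].
  - destruct IH as [H [pi [HH Hpi]]].
    destruct (decide (a = b)) as [Eab | Nab].
    { exists H, pi. split; auto. intros a' b' [E | Hin] Hp; [congruence | auto]. }
    assert (Hab : gmul a (ginv b) <> gone) by (intro E; now apply Nab, gmul_eq_one_l).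
    destruct (Hres _ Hab) as [K [rho [HK [_ Hrho]]]].
    exists (prod_group H K), (hom_pair pi rho). split; [now apply C_prod_group |].
    intros a' b' [E | Hin] Hp; simpl in Hp; injection Hp as Hp1 Hp2; [| auto].
    injection E as -> ->. exfalso. apply Hrho.
    now rewrite hfun_mul, Hp2, <- hfun_mul, gmulVr, hom1.
Qed.

Lemma LE_of_almost_hom_residually (X Q : group) (K : list X) (phi : X -> Q) :
  residually C Q -> almost_hom K phi ->
  exists (H : group) (psi : X -> H), C H /\ almost_hom K psi.
Proof.
  intros HQ [Hmul Hsep].
  destruct (residually_separates Q HQ (list_prod (map phi K) (map phi K)))
    as [H [pi [HH Hpi]]].
  exists H, (fun x => pi (phi x)). split; [exact HH | split].
  - intros x y Hx Hy. now rewrite Hmul, hfun_mul.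
  - intros x y Hx Hy E. apply Hsep, Hpi; auto. apply in_prod; now apply in_map.
Qed.

End FiniteDirectProducts.

Lemma residually_of_class (C : group -> Prop) (G : group) : C G -> residually C G.
Proof.
  intros HG g Hg. exists G, (hom_id G). repeat split; [exact HG | | exact Hg].
  intro y. now exists y.
Qed.

Theorem theorem1p5 (C : group -> Prop) :
  class_of_groups C ->
  (closed_under_free_products C \/
   (closed_under_finite_direct_products C /\ free_products_of_residually_preserve C)) ->
  forall (I : Type) (G : I -> group) (P : group) (iota : forall i, hom (G i) P),
    is_free_product G P iota -> (forall i, LE C (G i)) -> LE C P.
Proof.
  intros _ Hclosed I G P iota HP HLE K.
  destruct (free_product_LE C I G P iota HP HLE K) as [D [phi [HD Hphi]]].
  destruct Hclosed as [Hfree | [Hfdp Hres]].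
  - exists (free_product_group I D), phi. split; [| exact Hphi].
    exact (Hfree I D _ _ (free_product_groupP I D) HD).
  - apply (LE_of_almost_hom_residually C Hfdp _ _ K phi); [| exact Hphi].
    apply (Hres I D _ _ (free_product_groupP I D)).
    intro i. now apply residually_of_class.
Qed.
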